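(* In the allocation problem and Synchronized Greedy (SG) mechanism described in the context, suppose all $r_i$ are equal. Let $a^\pi$ be the SG allocation under truthful bids. Then for all agents $i,i'$ and all $k=1,\ldots,m$, \[\sum_{\ell=1}^k a^\pi_{i\pi_i(\ell)}\ \ge\ \sum_{\ell=1}^k a^\pi_{i'\pi_i(\ell)},\] i.e., every agent weakly majorization-prefers its own share to that of any other agent.
   Context: There are $m$ distinct divisible goods; good $j$ is available in amount $q_j>0$. There are $n$ agents; agent $i$ is to receive a total of $r_i>0$, with $\sum_j q_j=\sum_i r_i$. An allocation is a family $a_{ij}\ge 0$ with $\sum_j a_{ij}=r_i$ and $\sum_i a_{ij}=q_j$. Each agent $i$ has a true preference list $\pi_i$, a permutation of the goods ($\pi_i(1)$ most preferred); $\pi=(\pi_1,\ldots,\pi_n)$. The SG mechanism: each agent $i$ bids a permutation $\sigma_i$ of the goods; over time $t\in[0,1]$ each agent $i$ receives, at rate $r_i$, the good highest in $\sigma_i$ among those not yet exhausted (a good is exhausted when the total amount handed out equals $q_j$; several agents may receive a good simultaneously; upon exhaustion, agents receiving it switch instantly to their next non-exhausted good). $a^\pi_{ij}$ is the total amount of good $j$ agent $i$ receives when every agent $i$ bids $\pi_i$. *)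

From HB Require Import structures.
From mathcomp Require Import all_boot all_order all_algebra all_fingroup.
Set Implicit Arguments. Unset Strict Implicit. Unset Printing Implicit Defensive.
Import Order.TTheory GRing.Theory Num.Theory.
Local Open Scope ring_scope.

Section SG.
Variables (R : realFieldType) (n m : nat).
Variables (q : 'I_m -> R) (r : 'I_n -> R).
(* sigma i : 'S_m is agent i's bid; sigma i l is its (l+1)-th most preferred good. *)
Variable sigma : 'I_n -> 'S_m.

(* The good agent i currently receives when X is the set of exhausted goods:
   the highest good in sigma i that is not exhausted (None if all are). *)
Definition top (i : 'I_n) (X : {set 'I_m}) : option 'I_m :=
  ohead [seq sigma i l | l <- enum 'I_m & sigma i l \notin X].

Definition rate (X : {set 'I_m}) (j : 'I_m) : R :=
  \sum_(i | top i X == Some j) r i.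

Record state := State {
  exh : {set 'I_m};
  rem : {ffun 'I_m -> R};
  alloc : {ffun 'I_n * 'I_m -> R};
  time : R }.

(* One phase: run until the next exhaustion event (or until time 1). *)
Definition step (st : state) : state :=
  let X := exh st in
  let live j := (j \notin X) && (0 < rate X j) in
  let d := \big[Num.min/(1 - time st)]_(j | live j) (rem st j / rate X j) in
  {| exh := X :|: [set j | live j && (rem st j / rate X j == d)];
     rem := [ffun j => rem st j - rate X j * d];
     alloc := [ffun p => alloc st p +
                 (if top p.1 X == Some p.2 then r p.1 * d else 0)];
     time := time st + d |}.

Definition init : state :=
  {| exh := set0; rem := [ffun j => q j]; alloc := [ffun _ => 0]; time := 0 |}.

(* Each phase either exhausts a good or reaches time 1, so m+1 phases
   complete the process on [0,1]. *)
Definition sg_alloc (i : 'I_n) (j : 'I_m) : R :=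
  alloc (iter m.+1 step init) (i, j).

End SG.

(* At every moment of the SG process agent i eats its most preferred good
   that is not yet exhausted.  So whenever another agent i' is eating one of
   i's k favourite goods, that good is still available and i itself is eating
   one of its k favourite goods.  With equal rates, i's k favourite goods thus
   accumulate in i's share at least as fast as in i''s share, phase by phase. *)
From Pilot Require Import Defs.
From HB Require Import structures.
From mathcomp Require Import all_boot all_order all_algebra all_fingroup.
From mathcomp Require Import lra.
Set Implicit Arguments. Unset Strict Implicit. Unset Printing Implicit Defensive.
Import Order.TTheory GRing.Theory Num.Theory.
Local Open Scope ring_scope.

Section Top.
Variables (n m : nat) (sigma : 'I_n -> 'S_m).

Lemma top_notin p (X : {set 'I_m}) g : top sigma p X = Some g -> g \notin X.
Proof.
rewrite /top; set s := [seq _ | _ <- _ & _].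
case E: s => [|x s'] //= [<-].
have : x \in s by rewrite E mem_head.
by case/mapP => l; rewrite mem_filter => /andP[? _] ->.
Qed.

Lemma top_rank_le i (X : {set 'I_m}) (l : 'I_m) : sigma i l \notin X ->
  exists2 l' : 'I_m, (l' <= l)%N & top sigma i X = Some (sigma i l').
Proof.
move=> l_live; rewrite /top; set s := [seq l <- enum 'I_m | _].
have s_sorted : sorted (relpre val ltn) s.
  apply: sorted_filter; first by move=> a b c; apply: ltn_trans.
  by rewrite -sorted_map val_enum_ord iota_ltn_sorted.
have : l \in s by rewrite mem_filter l_live mem_enum.
case: s s_sorted => [|x s] //= s_sorted; rewrite inE => l_xs; exists x => //.
case/orP: l_xs => [/eqP -> //| l_s].
have := order_path_min (fun a b c => @ltn_trans (val a) (val b) (val c)) s_sorted.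
by move/allP/(_ _ l_s)/ltnW.
Qed.

Definition eats_prefix (i : 'I_n) (k : nat) (p : 'I_n) (X : {set 'I_m}) : bool :=
  [exists l : 'I_m, (l < k)%N && (top sigma p X == Some (sigma i l))].

Lemma eats_prefix_self i k p X : eats_prefix i k p X -> eats_prefix i k i X.
Proof.
case/existsP => l /andP[lk /eqP top_p].
have [l' l'l top_i] := top_rank_le (top_notin top_p).
by apply/existsP; exists l'; rewrite top_i eqxx andbT (leq_ltn_trans l'l).
Qed.

Lemma sum_prefix_top (R : nmodType) i k p X (c : R) :
  \sum_(l < m | (l < k)%N) (if top sigma p X == Some (sigma i l) then c else 0)
    = if eats_prefix i k p X then c else 0.
Proof.
rewrite /eats_prefix; case: existsP => [[l0 /andP[l0k /eqP top_p]] | none].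
  rewrite (bigD1 l0) //= top_p eqxx big1 ?addr0 // => l /andP[_ l_l0].
  case: eqP => // [[/perm_inj l0_l]].
  by rewrite l0_l eqxx in l_l0.
rewrite big1 // => l lk; case: eqP => // top_p.
by case: none; exists l; rewrite lk top_p eqxx.
Qed.

End Top.

Section Phase.
Variables (R : realFieldType) (n m : nat) (r : 'I_n -> R) (sigma : 'I_n -> 'S_m).
Hypothesis r_gt0 : forall i, 0 < r i.

Definition phase_length (st : state R n m) : R :=
  \big[Num.min/(1 - time st)]_(j | (j \notin exh st) && (0 < rate r sigma (exh st) j))
     (Defs.rem st j / rate r sigma (exh st) j).

Definition feasible (st : state R n m) : Prop :=
  time st <= 1 /\ forall j, j \notin exh st -> 0 <= Defs.rem st j.

Lemma rate_ge0 X j : 0 <= rate r sigma X j.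
Proof. by apply: sumr_ge0 => i _; apply: ltW. Qed.

Lemma phase_length_ge0 st : feasible st -> 0 <= phase_length st.
Proof.
case=> time_le1 rem_ge0; apply: (big_ind (fun x => 0 <= x)).
- by rewrite subr_ge0.
- by move=> x y x_ge0 y_ge0; rewrite le_min x_ge0 y_ge0.
- by move=> j /andP[j_live rate_gt0]; rewrite divr_ge0 ?rem_ge0 ?ltW.
Qed.

Lemma phase_length_le_time st : phase_length st <= 1 - time st.
Proof.
by rewrite /phase_length; elim/big_rec: _ => // j y _ y_le; rewrite ge_min y_le orbT.
Qed.

Lemma phase_length_le_rem st j :
  j \notin exh st -> 0 < rate r sigma (exh st) j ->
  phase_length st <= Defs.rem st j / rate r sigma (exh st) j.
Proof.
by move=> j_live rate_gt0; rewrite /phase_length (bigD1 j) ?j_live //= ge_min lexx.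
Qed.

Lemma alloc_step st p : alloc (step r sigma st) p = alloc st p +
  (if top sigma p.1 (exh st) == Some p.2 then r p.1 * phase_length st else 0).
Proof. by rewrite ffunE. Qed.

Lemma feasible_step st : feasible st -> feasible (step r sigma st).
Proof.
case=> time_le1 rem_ge0.
split; first by have := phase_length_le_time st; rewrite /= -/(phase_length st); lra.
move=> j; rewrite ffunE in_setU negb_or => /andP[j_live _].
have := rate_ge0 (exh st) j; rewrite le0r => /orP[/eqP -> | rate_gt0].
  by rewrite mul0r subr0 rem_ge0.
have := phase_length_le_rem j_live rate_gt0.
by rewrite -(ler_pM2l rate_gt0) mulrCA divff ?gt_eqF // mulr1 -subr_ge0.
Qed.

Definition prefix_share (i : 'I_n) (k : nat) (p : 'I_n) (st : state R n m) : R :=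
  \sum_(l < m | (l < k)%N) alloc st (p, sigma i l).

Lemma prefix_share_step i k p st :
  prefix_share i k p (step r sigma st) = prefix_share i k p st +
    (if eats_prefix sigma i k p (exh st) then r p * phase_length st else 0).
Proof.
rewrite -sum_prefix_top -big_split.
by apply: eq_bigr => l _; rewrite alloc_step.
Qed.

Lemma prefix_share_step_le i i' k st :
  r i' <= r i -> feasible st -> prefix_share i k i' st <= prefix_share i k i st ->
  prefix_share i k i' (step r sigma st) <= prefix_share i k i (step r sigma st).
Proof.
move=> r_le feas share_le; rewrite !prefix_share_step.
have d_ge0 := phase_length_ge0 feas.
case: ifPn => [/eats_prefix_self -> | _].
  by rewrite lerD // ler_wpM2r.
rewrite addr0 (le_trans share_le) //.
by case: ifP => _; rewrite ?addr0 // lerDl mulr_ge0 // ltW.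
Qed.

End Phase.

Theorem theorem4 (R : realFieldType) (n m : nat)
  (q : 'I_m -> R) (r : 'I_n -> R) (pi : 'I_n -> 'S_m)
  (hq : forall j, 0 < q j) (hr : forall i, 0 < r i)
  (hsum : \sum_(j < m) q j = \sum_(i < n) r i)
  (hreq : forall i i' : 'I_n, r i = r i') :
  forall (i i' : 'I_n) (k : nat), (0 < k <= m)%N ->
    \sum_(l < m | (l < k)%N) sg_alloc q r pi i' (pi i l)
      <= \sum_(l < m | (l < k)%N) sg_alloc q r pi i (pi i l).
Proof.
move=> i i' k _.
suff /(_ m.+1)[_] : forall t, let st := iter t (step r pi) (init n q) in
  feasible st /\ prefix_share pi i k i' st <= prefix_share pi i k i st by [].
elim=> [|t [feas share_le]] /=.
  split; first by split=> [|j _]; rewrite /= ?ler01 // ffunE ltW.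
  by rewrite /prefix_share !big1 // => l _; rewrite ffunE.
split; first exact: feasible_step.
by apply: prefix_share_step_le => //; rewrite (hreq i' i).
Qed.
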